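(* Let $n\ge1$, let $G$ be a group and $H$ a subgroup of $G$ with $G=HZ_n(G)$. Then $(H,H)$ and $(H,G)$ are relatively $n$-isoclinic, and $(H,G)$ and $(G,G)$ are relatively $n$-isoclinic.
   Context: Commutators: $[x,y]=x^{-1}y^{-1}xy$, left-normed $[x_1,\dots,x_{m+1}]=[[x_1,\dots,x_m],x_{m+1}]$. $Z_n(G)$ is the $n$-th term of the upper central series. $[_nH,G]$ is the subgroup generated by all $[h_1,\dots,h_n,g]$, $h_i\in H$, $g\in G$. Relative $n$-isoclinism: for groups $G_1,G_2$ and subgroups $H_i\le G_i$, $(H_1,G_1)$ and $(H_2,G_2)$ are relatively $n$-isoclinic if there is a pair $(\alpha,\beta)$ such that: (i) $\alpha: G_1/Z_n(G_1)\to G_2/Z_n(G_2)$ is an isomorphism mapping $H_1Z_n(G_1)/Z_n(G_1)$ (identified with $H_1/(Z_n(G_1)\cap H_1)$) onto $H_2Z_n(G_2)/Z_n(G_2)$; (ii) $\beta:[_nH_1,G_1]\to[_nH_2,G_2]$ is an isomorphism; (iii) for all $h_1,\dots,h_n\in H_1$, $g\in G_1$: $\beta([h_1,\dots,h_n,g])=[k_1,\dots,k_n,g']$ whenever $k_i\in H_2$, $k_iZ_n(G_2)=\alpha(h_iZ_n(G_1))$ and $g'Z_n(G_2)=\alpha(gZ_n(G_1))$. *)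

From Stdlib Require Import Arith.

Set Implicit Arguments.

Record group := Group {
  car :> Type;
  gmul : car -> car -> car;
  ginv : car -> car;
  gone : car;
  gmulA : forall x y z, gmul x (gmul y z) = gmul (gmul x y) z;
  gmul1 : forall x, gmul x gone = x;
  g1mul : forall x, gmul gone x = x;
  gmulV : forall x, gmul x (ginv x) = gone;
  gVmul : forall x, gmul (ginv x) x = gone
}.

Arguments gmul {g}.
Arguments ginv {g}.
Arguments gone {g}.

Section Defs.
Variable T : group.

Definition is_subgroup (S : T -> Prop) : Prop :=
  S gone /\ (forall x y, S x -> S y -> S (gmul x y)) /\ (forall x, S x -> S (ginv x)).

Definition gen (S : T -> Prop) : T -> Prop :=
  fun x => forall K : T -> Prop, is_subgroup K -> (forall y, S y -> K y) -> K x.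

Definition comm (x y : T) : T := gmul (gmul (ginv x) (ginv y)) (gmul x y).

Fixpoint lcomm (h : nat -> T) (k : nat) : T :=
  match k with
  | 0 => h 0
  | S k' => comm (lcomm h k') (h (S k'))
  end.

(* [h 0, ..., h (n-1), g]  (meaningful for n >= 1) *)
Definition ncomm (n : nat) (h : nat -> T) (g : T) : T := comm (lcomm h (pred n)) g.

Fixpoint Zn (G : T -> Prop) (k : nat) : T -> Prop :=
  match k with
  | 0 => fun x => x = gone
  | S k' => fun x => G x /\ forall g, G g -> Zn G k' (comm x g)
  end.

Definition ncommg (n : nat) (H G : T -> Prop) : T -> Prop :=
  gen (fun x => exists (h : nat -> T) (g : T),
         (forall i, i < n -> H (h i)) /\ G g /\ x = ncomm n h g).
End Defs.

(* Relative n-isoclinism of (H1,G1) and (H2,G2).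
   The isomorphism alpha : G1/Z_n(G1) -> G2/Z_n(G2) is described through a map
   of representatives a : T1 -> T2, alpha(x Z_n(G1)) = a(x) Z_n(G2). *)
Definition rel_n_isoclinic (n : nat) (T1 T2 : group)
  (H1 G1 : T1 -> Prop) (H2 G2 : T2 -> Prop) : Prop :=
  let Z1 := @Zn T1 G1 n in
  let Z2 := @Zn T2 G2 n in
  let B1 := @ncommg T1 n H1 G1 in
  let B2 := @ncommg T2 n H2 G2 in
  exists (a : T1 -> T2) (b : T1 -> T2),
    (* (i) alpha is a well-defined isomorphism G1/Z1 -> G2/Z2 *)
    (forall x, G1 x -> G2 (a x)) /\
    (forall x y, G1 x -> G1 y -> Z1 (gmul (ginv x) y) -> Z2 (gmul (ginv (a x)) (a y))) /\
    (forall x y, G1 x -> G1 y -> Z2 (gmul (ginv (a (gmul x y))) (gmul (a x) (a y)))) /\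
    (forall x y, G1 x -> G1 y -> Z2 (gmul (ginv (a x)) (a y)) -> Z1 (gmul (ginv x) y)) /\
    (forall y, G2 y -> exists x, G1 x /\ Z2 (gmul (ginv (a x)) y)) /\
    (*     mapping H1 Z1/Z1 onto H2 Z2/Z2 *)
    (forall h, H1 h -> exists k, H2 k /\ Z2 (gmul (ginv (a h)) k)) /\
    (forall k, H2 k -> exists h, H1 h /\ Z2 (gmul (ginv (a h)) k)) /\
    (* (ii) beta : [_n H1, G1] -> [_n H2, G2] is an isomorphism *)
    (forall x, B1 x -> B2 (b x)) /\
    (forall x y, B1 x -> B1 y -> b (gmul x y) = gmul (b x) (b y)) /\
    (forall x y, B1 x -> B1 y -> b x = b y -> x = y) /\
    (forall y, B2 y -> exists x, B1 x /\ b x = y) /\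
    (* (iii) compatibility *)
    (forall (h : nat -> T1) (g : T1) (k : nat -> T2) (g' : T2),
        (forall i, i < n -> H1 (h i)) -> G1 g ->
        (forall i, i < n -> H2 (k i)) -> G2 g' ->
        (forall i, i < n -> Z2 (gmul (ginv (a (h i))) (k i))) ->
        Z2 (gmul (ginv (a g)) g') ->
        b (@ncomm T1 n h g) = @ncomm T2 n k g').

(* Since G = H Z_n(G), every element of G is congruent modulo Z_n(G) to an element of H.
   By the Hall-Witt identity, [d, Z_(k+m)] <= Z_m for every left-normed commutator d of
   weight k; hence a left-normed commutator [x_0, ..., x_j] only depends on the classes of
   its entries modulo Z_j.  It follows that [_n H, H] = [_n H, G] = [_n G, G] and
   Z_n(H) = H \cap Z_n(G), so the identity maps realise both relative n-isoclinisms. *)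

From Stdlib Require Import Arith Lia.

Local Notation "x * y" := (gmul x y).
Local Notation "x ^-1" := (ginv x) (at level 3, format "x ^-1").
Local Notation "[~ x , y ]" := (comm _ x y) (format "[~  x ,  y ]").

Section GroupLaws.
Context {T : group}.
Implicit Types x y z : T.

Definition conjg x y := y^-1 * (x * y).

Lemma mulgAr x y z : (x * y) * z = x * (y * z).
Proof. now rewrite gmulA. Qed.

Lemma mulKVg x y : x * (x^-1 * y) = y.
Proof. now rewrite gmulA, gmulV, g1mul. Qed.

Lemma mulKg x y : x^-1 * (x * y) = y.
Proof. now rewrite gmulA, gVmul, g1mul. Qed.

Lemma invg_unique x y : x * y = gone -> y = x^-1.
Proof. intro e. now rewrite <- (mulKg x y), e, gmul1. Qed.

Lemma invMg x y : (x * y)^-1 = y^-1 * x^-1.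
Proof. symmetry; apply invg_unique. now rewrite mulgAr, mulKVg, gmulV. Qed.

Lemma invgK x : x^-1^-1 = x.
Proof. symmetry; apply invg_unique, gVmul. Qed.

Lemma invg1 : (@gone T)^-1 = gone.
Proof. symmetry; apply invg_unique, g1mul. Qed.

Lemma mulVg1_eq x y : x^-1 * y = gone -> x = y.
Proof. intro e. now rewrite <- (mulKVg x y), e, gmul1. Qed.

End GroupLaws.

Create HintDb group_laws.
#[export] Hint Rewrite @mulgAr @mulKVg @mulKg @invMg @invgK @invg1 gmulV gVmul gmul1 g1mul
  : group_laws.

Ltac gsimpl := unfold comm, conjg; autorewrite with group_laws; try reflexivity.

Section Commutators.
Context {T : group}.
Implicit Types x y z w c d g u : T.

Lemma invg_comm x y : [~ x, y]^-1 = [~ y, x].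
Proof. gsimpl. Qed.

Lemma hall_witt_comm x y z :
  [~ [~ x, y], z] =
  conjg ((conjg [~ [~ y^-1, z^-1], x] z * conjg [~ [~ z, x^-1], y^-1] x)^-1) y.
Proof. gsimpl. Qed.

Lemma comm_mulg c w y z :
  [~ c, y]^-1 * [~ c * w, y * z] =
  conjg (conjg [~ c, z] w * [~ w, z]) [~ c, y] * ([~ [~ c, y], w * z] * conjg [~ w, y] z).
Proof. gsimpl. Qed.

Definition scons x (h : nat -> T) (i : nat) : T :=
  match i with 0 => x | S i' => h i' end.

Lemma lcomm_scons_succ j x h :
  lcomm T (scons x h) (S j) = lcomm T (scons [~ x, h 0] (fun i => h (S i))) j.
Proof. induction j as [|j IH]; [reflexivity|]. cbn [lcomm] in *. now rewrite IH. Qed.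

Section UpperCentralSeries.
Variable Q : T -> Prop.
Hypothesis hQ : is_subgroup T Q.

Lemma subgroup1 : Q gone.
Proof. apply hQ. Qed.

Lemma subgroupM x y : Q x -> Q y -> Q (x * y).
Proof. apply hQ. Qed.

Lemma subgroupV x : Q x -> Q x^-1.
Proof. apply hQ. Qed.

Lemma subgroup_comm x y : Q x -> Q y -> Q [~ x, y].
Proof. intros; unfold comm; auto using subgroupM, subgroupV. Qed.

Lemma subgroup_conjg x y : Q x -> Q y -> Q (conjg x y).
Proof. intros; unfold conjg; auto using subgroupM, subgroupV. Qed.

Local Hint Resolve subgroup1 subgroupM subgroupV subgroup_comm subgroup_conjg : core.

Lemma Zn_sub k x : Zn T Q k x -> Q x.
Proof. destruct k as [|k]; cbn [Zn]; [intros ->; auto | intros [hx _]; exact hx]. Qed.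

Lemma Zn_normal k :
  is_subgroup T (Zn T Q k) /\ forall x y, Zn T Q k x -> Q y -> Zn T Q k (conjg x y).
Proof.
  induction k as [|k [[Z1 [ZM ZV]] ZJ]]; cbn [Zn].
  - repeat split.
    + intros x y -> ->; apply g1mul.
    + intros x ->; apply invg1.
    + intros x y -> _; gsimpl.
  - split; [split; [|split]|].
    + split; [auto|]. intros g _. replace [~ gone, g] with (@gone T) by gsimpl. exact Z1.
    + intros x y [hx fx] [hy fy]. split; [auto|]. intros g hg.
      replace [~ x * y, g] with (conjg [~ x, g] y * [~ y, g]) by gsimpl. auto.
    + intros x [hx fx]. split; [auto|]. intros g hg.
      replace [~ x^-1, g] with (conjg [~ x, g]^-1 x^-1) by gsimpl. auto.
    + intros x y [hx fx] hy. split; [auto|]. intros g hg.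
      replace [~ conjg x y, g] with (conjg [~ x, conjg g y^-1] y) by gsimpl. auto.
Qed.

Lemma Zn1 k : Zn T Q k gone.
Proof. apply Zn_normal. Qed.

Lemma ZnM k x y : Zn T Q k x -> Zn T Q k y -> Zn T Q k (x * y).
Proof. apply Zn_normal. Qed.

Lemma ZnV k x : Zn T Q k x -> Zn T Q k x^-1.
Proof. apply Zn_normal. Qed.

Lemma Zn_conjg k x y : Zn T Q k x -> Q y -> Zn T Q k (conjg x y).
Proof. apply Zn_normal. Qed.

Lemma Zn_commr k x g : Zn T Q (S k) x -> Q g -> Zn T Q k [~ x, g].
Proof. intros [_ f] hg; auto. Qed.

Lemma Zn_comml k x g : Zn T Q (S k) x -> Q g -> Zn T Q k [~ g, x].
Proof. intros; rewrite <- invg_comm; auto using ZnV, Zn_commr. Qed.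

Lemma Zn_succ k x : Zn T Q k x -> Zn T Q (S k) x.
Proof.
  revert x; induction k as [|k IH]; intros x hx.
  - cbn [Zn] in hx; subst x. apply Zn1.
  - destruct hx as [hx f]. split; [exact hx|]. auto.
Qed.

Lemma Zn_mono k k' x : k <= k' -> Zn T Q k x -> Zn T Q k' x.
Proof. induction 1; auto using Zn_succ. Qed.

Definition Zcongr k x y := Zn T Q k (x^-1 * y).

Lemma Zcongr_refl k x : Zcongr k x x.
Proof. unfold Zcongr; rewrite gVmul; apply Zn1. Qed.

Lemma Zcongr_sym k x y : Zcongr k x y -> Zcongr k y x.
Proof.
  unfold Zcongr; intros; replace (y^-1 * x) with ((x^-1 * y)^-1) by gsimpl.
  auto using ZnV.
Qed.

Lemma Zcongr0_eq x y : Zcongr 0 x y -> x = y.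
Proof. apply mulVg1_eq. Qed.

Definition lowers k d := Q d /\ forall m z, Zn T Q (k + m) z -> Zn T Q m [~ d, z].

Lemma lowers_comml k d m z : lowers k d -> Zn T Q (k + m) z -> Zn T Q m [~ z, d].
Proof. intros [_ Ld] hz; rewrite <- invg_comm; auto using ZnV. Qed.

Lemma lowersV k d : lowers k d -> lowers k d^-1.
Proof.
  intros [hd Ld]. split; [auto|]. intros m z hz.
  replace [~ d^-1, z] with (conjg [~ d, z]^-1 d^-1) by gsimpl.
  auto using Zn_conjg, ZnV.
Qed.

Lemma lowers_weaken k d : lowers (S k) d -> lowers k d.
Proof. intros [hd Ld]; split; [exact hd|]. intros m z hz; apply Ld, Zn_succ, hz. Qed.

Lemma lowers1 x : Q x -> lowers 1 x.
Proof. intros hx; split; [exact hx|]; intros; auto using Zn_comml. Qed.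

Lemma lowers_comm k d y : lowers k d -> Q y -> lowers (S k) [~ d, y].
Proof.
  intros Ld hy. assert (hd : Q d) by apply Ld.
  split; [auto|]. intros m z hz. assert (hzQ : Q z) by exact (Zn_sub _ _ hz).
  rewrite hall_witt_comm. apply Zn_conjg; [|exact hy]. apply ZnV, ZnM.
  - apply Zn_conjg; [|exact hzQ]. apply (lowers_comml k); [exact Ld|].
    apply Zn_comml; [exact (ZnV _ _ hz) | auto].
  - apply Zn_conjg; [|exact hd]. apply Zn_commr; [|auto].
    apply (lowers_comml k); [exact (lowersV _ _ Ld)|]. now rewrite Nat.add_succ_r.
Qed.

Lemma lowers_lcomm j f : (forall i, i <= j -> Q (f i)) -> lowers (S j) (lcomm T f j).
Proof.
  induction j as [|j IH]; intros hf; cbn [lcomm].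
  - apply lowers1, hf; lia.
  - apply lowers_comm; [apply IH; auto | apply hf; lia].
Qed.

(* With c' = c w and y' = y z, every factor of the expansion comm_mulg lies in Z_k. *)
Lemma comm_congr j k c c' y y' :
  lowers (S j) c -> Q y -> Zcongr (S k) c c' -> Zcongr (S j + k) y y' ->
  Zcongr k [~ c, y] [~ c', y'].
Proof.
  unfold Zcongr. intros Lc hy hw hz.
  rewrite <- (mulKVg c c'), <- (mulKVg y y'), comm_mulg.
  set (w := c^-1 * c') in *; set (z := y^-1 * y') in *.
  assert (hc : Q c) by apply Lc.
  assert (hwQ : Q w) by exact (Zn_sub _ _ hw).
  assert (hzQ : Q z) by exact (Zn_sub _ _ hz).
  assert (Lcy : lowers (S j) [~ c, y]) by (apply lowers_weaken, lowers_comm; auto).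
  apply ZnM; [apply Zn_conjg; [apply ZnM|] | apply ZnM].
  - apply Zn_conjg; [apply Lc; exact hz | exact hwQ].
  - apply Zn_commr; auto.
  - auto.
  - apply Lcy, ZnM; [apply (Zn_mono (S k)); [lia | exact hw] | exact hz].
  - apply Zn_conjg; [apply Zn_commr |]; auto.
Qed.

Lemma lcomm_congr j k f f' :
  (forall i, i <= j -> Q (f i)) -> (forall i, i <= j -> Zcongr (j + k) (f i) (f' i)) ->
  Zcongr k (lcomm T f j) (lcomm T f' j).
Proof.
  revert k; induction j as [|j IH]; intros k hf hff'; cbn [lcomm].
  - exact (hff' 0 (le_n 0)).
  - apply (comm_congr j).
    + apply lowers_lcomm; auto.
    + apply hf; lia.
    + apply IH; [auto | intros i hi; rewrite Nat.add_succ_r; auto].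
    + apply hff'; lia.
Qed.

Lemma lcomm_eq_of_congr j f f' :
  (forall i, i <= j -> Q (f i)) -> (forall i, i <= j -> Zcongr j (f i) (f' i)) ->
  lcomm T f j = lcomm T f' j.
Proof.
  intros hf hff'. apply Zcongr0_eq, lcomm_congr; [exact hf|].
  intros i hi; rewrite Nat.add_0_r; auto.
Qed.

Lemma ncomm_eq_of_congr n h h' g g' :
  1 <= n -> (forall i, i < n -> Q (h i)) -> (forall i, i < n -> Zcongr n (h i) (h' i)) ->
  Q g -> Zcongr n g g' -> ncomm T n h g = ncomm T n h' g'.
Proof.
  intros hn hh hhh' hg hgg'. destruct n as [|m]; [lia|]. unfold ncomm; cbn [pred].
  apply Zcongr0_eq, (comm_congr m).
  - apply lowers_lcomm; intros i hi; apply hh; lia.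
  - exact hg.
  - apply lcomm_congr; [intros i hi; apply hh; lia|].
    intros i hi; rewrite Nat.add_1_r; apply hhh'; lia.
  - now rewrite Nat.add_0_r.
Qed.

Lemma Zn_iff_lcomm_trivial j x : Q x ->
  (Zn T Q j x <-> forall h, (forall i, i < j -> Q (h i)) -> lcomm T (scons x h) j = gone).
Proof.
  revert x; induction j as [|j IH]; intros x hx; cbn [Zn].
  - split; [now intros -> |]. intros e; apply (e (fun _ => gone)); lia.
  - split.
    + intros [_ hZ] h hh. rewrite lcomm_scons_succ.
      assert (h0 : Q (h 0)) by (apply hh; lia).
      apply (IH _ (subgroup_comm _ _ hx h0)); [auto | intros i hi; apply hh; lia].
    + intros e. split; [exact hx|]. intros g hg. apply IH; [auto|]. intros h hh.
      transitivity (lcomm T (scons x (scons g h)) (S j)); [now rewrite lcomm_scons_succ|].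
      apply e. intros [|i] hi; [exact hg | apply hh; lia].
Qed.

End UpperCentralSeries.
End Commutators.

Lemma Zn_restrict {T : group} (G H : T -> Prop) k u :
  is_subgroup T H -> (forall x, H x -> G x) -> Zn T G k u -> H u -> Zn T H k u.
Proof.
  intros hH sHG; revert u; induction k as [|k IH]; intros u hu Hu; cbn [Zn] in *;
    [exact hu|].
  destruct hu as [_ f]. split; [exact Hu|]. intros g hg.
  apply IH; [apply f, sHG, hg | apply subgroup_comm; auto].
Qed.

Lemma gen_ext {T : group} (S1 S2 : T -> Prop) :
  (forall y, S1 y <-> S2 y) -> forall x, gen T S1 x <-> gen T S2 x.
Proof.
  intros e x; split; intros hx K hK hS; apply hx; try exact hK;
    intros y hy; apply hS, e, hy.
Qed.

Lemma finite_choice {A : Type} (a : A) (R : nat -> A -> Prop) m :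
  (forall i, i < m -> exists y, R i y) -> exists f, forall i, i < m -> R i (f i).
Proof.
  induction m as [|m IH]; intros hR; [exists (fun _ => a); lia|].
  destruct IH as [f hf]; [auto|]. destruct (hR m) as [y hy]; [lia|].
  exists (fun i => if i =? m then y else f i). intros i hi.
  destruct (Nat.eqb_spec i m); [now subst | apply hf; lia].
Qed.

Lemma rel_n_isoclinic_id {T : group} n (H1 G1 H2 G2 : T -> Prop) :
  1 <= n -> is_subgroup T G2 ->
  (forall x, G1 x -> G2 x) -> (forall x, H1 x -> G2 x) -> (forall x, H2 x -> G2 x) ->
  (forall x y, G1 x -> G1 y -> Zcongr G1 n x y <-> Zcongr G2 n x y) ->
  (forall y, G2 y -> exists x, G1 x /\ Zcongr G2 n x y) ->
  (forall h, H1 h -> exists k, H2 k /\ Zcongr G2 n h k) ->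
  (forall k, H2 k -> exists h, H1 h /\ Zcongr G2 n h k) ->
  (forall x, ncommg T n H1 G1 x <-> ncommg T n H2 G2 x) ->
  rel_n_isoclinic n T T H1 G1 H2 G2.
Proof.
  intros hn hG2 sG1 sH1 sH2 eZ onto_G onto_H2 onto_H1 eB.
  exists (fun x => x), (fun x => x); cbv zeta.
  repeat split; auto.
  - intros x y hx hy. apply eZ; auto.
  - intros x y _ _. rewrite gVmul. apply Zn1, hG2.
  - intros x y hx hy. apply eZ; auto.
  - apply eB.
  - intros y hy. exists y. split; [apply eB, hy | reflexivity].
  - intros h g k g' hh hg hk hg' hhk hgg'.
    apply (ncomm_eq_of_congr G2); auto.
Qed.

Section Decomposition.
Context {T : group}.
Variables (n : nat) (G H : T -> Prop).
Hypotheses (hn : 1 <= n) (hG : is_subgroup T G) (hH : is_subgroup T H)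
  (sHG : forall x, H x -> G x)
  (G_HZ : forall g, G g -> exists h z, H h /\ Zn T G n z /\ g = h * z).

Lemma exists_H_congr y : G y -> exists h, H h /\ Zcongr G n h y.
Proof.
  intros hy. destruct (G_HZ y hy) as [h [z [Hh [hz ->]]]].
  exists h. split; [exact Hh|]. unfold Zcongr. now rewrite mulKg.
Qed.

Lemma H_representatives m f : (forall i, i < m -> G (f i)) ->
  exists h, forall i, i < m -> H (h i) /\ Zcongr G n (f i) (h i).
Proof.
  intros hf. apply (finite_choice gone (fun i h => H h /\ Zcongr G n (f i) h)).
  intros i hi.
  destruct (exists_H_congr (f i)) as [h [Hh e]]; [auto|].
  exists h. split; [exact Hh | apply Zcongr_sym; auto].
Qed.

(* Membership in Z_n(G) is tested by n-fold commutators with elements of G, and these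
   may be replaced by their representatives in H. *)
Lemma Zn_H_sub_Zn_G u : Zn T H n u -> Zn T G n u.
Proof.
  intros hu. assert (Hu : H u) by exact (Zn_sub H hH n u hu).
  apply (Zn_iff_lcomm_trivial G hG n u (sHG u Hu)). intros f hf.
  destruct (H_representatives n f hf) as [h hh].
  transitivity (lcomm T (scons u h) n).
  - apply (lcomm_eq_of_congr G hG).
    + intros [|i] hi; cbn; [auto | apply hf; lia].
    + intros [|i] hi; cbn; [apply Zcongr_refl; auto | apply hh; lia].
  - apply (Zn_iff_lcomm_trivial H hH n u Hu); [exact hu|].
    intros i hi; apply hh, hi.
Qed.

Lemma ncommg_HH_HG x : ncommg T n H H x <-> ncommg T n H G x.
Proof.
  apply gen_ext. intros y; split.
  - intros [h [g [hh [hg ->]]]]. exists h, g. auto.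
  - intros [h [g [hh [hg ->]]]]. destruct (exists_H_congr g hg) as [g0 [Hg0 e]].
    exists h, g0. split; [exact hh | split; [exact Hg0|]].
    apply (ncomm_eq_of_congr G); auto using Zcongr_refl, Zcongr_sym.
Qed.

Lemma ncommg_HG_GG x : ncommg T n H G x <-> ncommg T n G G x.
Proof.
  apply gen_ext. intros y; split.
  - intros [h [g [hh [hg ->]]]]. exists h, g. auto.
  - intros [k [g [hk [hg ->]]]]. destruct (H_representatives n k hk) as [h hh].
    exists h, g. split; [apply hh | split; [exact hg|]].
    apply (ncomm_eq_of_congr G); auto using Zcongr_refl; intros i hi; apply hh, hi.
Qed.

Lemma rel_n_isoclinic_HH_HG : rel_n_isoclinic n T T H H H G.
Proof.
  apply rel_n_isoclinic_id; auto.
  - intros x y hx hy. unfold Zcongr.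
    assert (hxy : H (x^-1 * y)) by (apply (subgroupM H hH), hy; apply (subgroupV H hH), hx).
    split; [apply Zn_H_sub_Zn_G | intros e; apply (Zn_restrict G)]; assumption.
  - apply exists_H_congr.
  - intros h hh. exists h. auto using Zcongr_refl.
  - intros h hh. exists h. auto using Zcongr_refl.
  - apply ncommg_HH_HG.
Qed.

Lemma rel_n_isoclinic_HG_GG : rel_n_isoclinic n T T H G G G.
Proof.
  apply rel_n_isoclinic_id; auto.
  - reflexivity.
  - intros y hy. exists y. auto using Zcongr_refl.
  - intros h hh. exists h. auto using Zcongr_refl.
  - apply exists_H_congr.
  - apply ncommg_HG_GG.
Qed.

End Decomposition.

Theorem lemma2p3 (n : nat) (T : group) (G H : T -> Prop) :
  1 <= n ->
  is_subgroup T G -> is_subgroup T H -> (forall x, H x -> G x) ->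
  (forall g, G g -> exists h z, H h /\ Zn T G n z /\ g = gmul h z) ->
  rel_n_isoclinic n T T H H H G /\ rel_n_isoclinic n T T H G G G.
Proof.
  intros hn hG hH sHG G_HZ.
  split; [apply rel_n_isoclinic_HH_HG | apply rel_n_isoclinic_HG_GG]; assumption.
Qed.
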